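(* For every cake $C$ and every family $S$ of usable pieces, $$\mathrm{PropEF}(C,2,S)\ \ge\ \mathrm{Prop}(C,2,S)\cdot\inf_{s\in S}\mathrm{PropEF}(s,2,S).$$
   Context: A cake is a Borel subset of $\mathbb{R}^d$; $S$ is a family of Borel subsets of $\mathbb{R}^d$. For a cake $D$ (here $D=C$ or $D=s\in S$), a value measure on $D$ is $V(X)=\int_X v$ with $v$ non-negative, bounded, integrable on $D$, $V(D)<\infty$; $V^S(X):=\sup\{V(s'):s'\in S,s'\subseteq X\}$. For $n$ agents with value measures $V_1,\dots,V_n$ on $D$, an $S$-allocation of $D$ is $(X_1,\dots,X_n)$ with $X_i\in S$ pairwise disjoint and $\bigcup_i X_i\subseteq D$; it is envy-free if $V_i^S(X_i)\ge V_i^S(X_j)$ for all $i,j$. $\mathrm{PropEF}(D,n,S):=\inf_{V_1,\dots,V_n}\sup_X\min_i V_i(X_i)/V_i(D)$, infimum over all $n$-tuples of value measures on $D$ and supremum over envy-free $S$-allocations of $D$; $\mathrm{Prop}(D,n,S)$ is defined identically with the supremum over all $S$-allocations of $D$. *)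

From Stdlib Require Import Reals List Classical ClassicalEpsilon.
From Stdlib Require Fin.
Open Scope R_scope.

Definition Rd (d : nat) := Fin.t d -> R.
Definition rset (d : nat) := Rd d -> Prop.

Definition sup_with (dflt : R) (E : R -> Prop) : R :=
  match excluded_middle_informative (bound E /\ exists x, E x) with
  | left H => proj1_sig (completeness E (proj1 H) (proj2 H))
  | right _ => dflt
  end.
Definition inf_with (dflt : R) (E : R -> Prop) : R :=
  - sup_with (- dflt) (fun x => E (- x)).

Definition is_open {d} (U : rset d) : Prop :=
  forall x, U x -> exists eps, 0 < eps /\
    forall y : Rd d, (forall i, Rabs (y i - x i) < eps) -> U y.

Inductive Borel {d} : rset d -> Prop :=
| Borel_open U : is_open U -> Borel U
| Borel_compl A : Borel A -> Borel (fun x => ~ A x)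
| Borel_cunion (F : nat -> rset d) : (forall n, Borel (F n)) ->
    Borel (fun x => exists n, F n x)
| Borel_ext A B : Borel A -> (forall x, A x <-> B x) -> Borel B.

(* Lebesgue (outer) measure via countable covers by closed boxes. *)
Fixpoint fin_prod (d : nat) : (Fin.t d -> R) -> R :=
  match d with
  | O => fun _ => 1
  | S k => fun f => f Fin.F1 * fin_prod k (fun i => f (Fin.FS i))
  end.
Definition box_vol {d} (a b : Rd d) : R := fin_prod d (fun i => b i - a i).

Definition cover_sum {d} (A : rset d) (r : R) : Prop :=
  exists a b : nat -> Rd d,
    (forall n i, a n i <= b n i) /\
    (forall x, A x -> exists n, forall i, a n i <= x i <= b n i) /\
    infinite_sum (fun n => box_vol (a n) (b n)) r.

Definition lfinite {d} (A : rset d) : Prop := exists r, cover_sum A r.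
Definition lmeas {d} (A : rset d) : R := inf_with 0 (cover_sum A).

(* Lebesgue integral of a nonnegative function over X: sup of integrals of
   nonnegative simple functions below v on X. *)
Definition disj {d} (p q : R * rset d) : Prop :=
  forall x, snd p x -> snd q x -> False.

Definition simple_sum {d} (v : Rd d -> R) (X : rset d) (r : R) : Prop :=
  exists l : list (R * rset d),
    (forall p, In p l ->
       0 <= fst p /\ Borel (snd p) /\ lfinite (snd p) /\
       (forall x, snd p x -> X x /\ fst p <= v x)) /\
    ForallOrdPairs disj l /\
    r = fold_right (fun p acc => fst p * lmeas (snd p) + acc) 0 l.

Definition lint {d} (v : Rd d -> R) (X : rset d) : R := sup_with 0 (simple_sum v X).

(* v is the density of a value measure on the cake D: nonnegative, bounded,
   measurable, integrable on D (V(D) < oo); we also require V(D) > 0 so that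
   the normalised values V(X)/V(D) make sense. *)
Definition value_density {d} (D : rset d) (v : Rd d -> R) : Prop :=
  (forall x, D x -> 0 <= v x) /\
  (exists M, forall x, D x -> v x <= M) /\
  (forall t, Borel (fun x => D x /\ t < v x)) /\
  bound (simple_sum v D) /\
  0 < lint v D.

Definition VS {d} (S : rset d -> Prop) (v : Rd d -> R) (X : rset d) : R :=
  sup_with 0 (fun r => exists s', S s' /\ (forall x, s' x -> X x) /\ r = lint v s').

Definition is_S_alloc {d} (n : nat) (S : rset d -> Prop) (D : rset d)
  (X : nat -> rset d) : Prop :=
  (forall i, (i < n)%nat -> S (X i)) /\
  (forall i j, (i < n)%nat -> (j < n)%nat -> i <> j ->
     forall x, X i x -> X j x -> False) /\
  (forall i x, (i < n)%nat -> X i x -> D x).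

Definition envy_free {d} (n : nat) (S : rset d -> Prop)
  (v : nat -> Rd d -> R) (X : nat -> rset d) : Prop :=
  forall i j, (i < n)%nat -> (j < n)%nat -> VS S (v i) (X j) <= VS S (v i) (X i).

Fixpoint min_upto (f : nat -> R) (n : nat) : R :=
  match n with
  | O => 1
  | S O => f O
  | S m => Rmin (min_upto f m) (f m)
  end.

Definition min_ratio {d} (n : nat) (D : rset d) (v : nat -> Rd d -> R)
  (X : nat -> rset d) : R :=
  min_upto (fun i => lint (v i) (X i) / lint (v i) D) n.

Definition PropEF {d} (D : rset d) (n : nat) (S : rset d -> Prop) : R :=
  inf_with 1 (fun r => exists v : nat -> Rd d -> R,
    (forall i, (i < n)%nat -> value_density D (v i)) /\
    r = sup_with 0 (fun q => exists X, is_S_alloc n S D X /\ envy_free n S v X /\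
                                   q = min_ratio n D v X)).

Definition PropA {d} (D : rset d) (n : nat) (S : rset d -> Prop) : R :=
  inf_with 1 (fun r => exists v : nat -> Rd d -> R,
    (forall i, (i < n)%nat -> value_density D (v i)) /\
    r = sup_with 0 (fun q => exists X, is_S_alloc n S D X /\
                                   q = min_ratio n D v X)).

(* Start from an S-allocation giving each agent a fraction at least a of the
   cake, with a close to Prop.  If one of its pieces s is worth at least a to
   both agents, an envy-free division of s (giving each agent a fraction of s
   close to PropEF s) is an envy-free division of the cake giving each agent
   at least a fraction a times that.  Otherwise each agent values the other's
   piece below a and her own piece at least a, so the allocation is already
   envy-free.  Envy is measured with V^S, which on pieces of S is the plain
   integral. *)
From Stdlib Require Import Reals Lra Lia Classical ClassicalEpsilon.
Open Scope R_scope.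

Lemma le_of_forall_lt_pos (x y : R) :
  0 <= y -> (forall z, 0 < z < x -> z <= y) -> x <= y.
Proof.
  intros Hy Hz. apply Rnot_lt_le; intros Hlt.
  assert (H : (x + y) / 2 <= y) by (apply Hz; lra). lra.
Qed.

Lemma mult_le_of_forall_lt (P Q r : R) :
  0 <= P -> 0 <= Q -> 0 <= r ->
  (forall a b, 0 < a < P -> 0 < b < Q -> a * b <= r) -> P * Q <= r.
Proof.
  intros HP HQ Hr Hab.
  assert (HaQ : forall a, 0 < a < P -> a * Q <= r).
  { intros a Ha. apply le_of_forall_lt_pos; auto. intros z Hz.
    replace z with (a * (z / a)) by (field; lra).
    apply Hab; auto. split.
    - apply Rdiv_lt_0_compat; lra.
    - apply Rmult_lt_reg_l with a; [lra|]. replace (a * (z / a)) with z by (field; lra). lra. }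
  apply le_of_forall_lt_pos; auto. intros z Hz.
  assert (HQ0 : 0 < Q) by nra.
  replace z with (z / Q * Q) by (field; lra).
  apply HaQ. split.
  - apply Rdiv_lt_0_compat; lra.
  - apply Rmult_lt_reg_r with Q; [lra|]. replace (z / Q * Q) with z by (field; lra). lra.
Qed.

Section SupInf.

Variable E : R -> Prop.

Lemma sup_with_lub (dflt : R) :
  bound E -> (exists x, E x) -> is_lub E (sup_with dflt E).
Proof.
  intros Hb Hn. unfold sup_with.
  destruct (excluded_middle_informative _) as [H|H].
  - destruct (completeness E (proj1 H) (proj2 H)) as [m Hm]; exact Hm.
  - exfalso; apply H; split; auto.
Qed.

Lemma sup_with_dflt (dflt : R) : ~ (bound E /\ exists x, E x) -> sup_with dflt E = dflt.
Proof.
  intros Hn. unfold sup_with.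
  destruct (excluded_middle_informative _) as [H|H]; [contradiction|reflexivity].
Qed.

Lemma sup_with_ge (dflt x : R) : bound E -> E x -> x <= sup_with dflt E.
Proof.
  intros Hb Hx. apply (sup_with_lub dflt Hb (ex_intro _ x Hx)); auto.
Qed.

Lemma sup_with_le (dflt M : R) :
  (forall x, E x -> x <= M) -> (exists x, E x) -> sup_with dflt E <= M.
Proof.
  intros HM Hn. apply (sup_with_lub dflt); auto. exists M; exact HM.
Qed.

Lemma sup_with0_approx (a : R) :
  0 <= a -> a < sup_with 0 E -> exists x, E x /\ a < x.
Proof.
  intros Ha Hs.
  destruct (classic (bound E /\ exists x, E x)) as [[Hb Hn]|Hn].
  - apply NNPP; intros Hno.
    enough (sup_with 0 E <= a) by lra.
    apply sup_with_le; auto. intros x Hx. apply Rnot_lt_le; intros Hlt. eauto.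
  - rewrite sup_with_dflt in Hs by auto. lra.
Qed.

Lemma sup_with0_unit : (forall x, E x -> 0 <= x <= 1) -> 0 <= sup_with 0 E <= 1.
Proof.
  intros H.
  destruct (classic (exists x, E x)) as [[x Hx]|Hn].
  - assert (Hb : bound E) by (exists 1; intros y Hy; apply H; auto).
    split.
    + apply Rle_trans with x; [apply H; auto | apply sup_with_ge; auto].
    + apply sup_with_le; [intros y Hy; apply H; auto | eauto].
  - rewrite sup_with_dflt; [lra|]. intros [_ Hx]; auto.
Qed.

End SupInf.

Section InfWith.

Variable E : R -> Prop.

Lemma inf_with_le (dflt x : R) :
  (exists m, forall y, E y -> m <= y) -> E x -> inf_with dflt E <= x.
Proof.
  intros [m Hm] Hx. unfold inf_with.
  assert (Hb : bound (fun z => E (- z))) by (exists (- m); intros z Hz; apply Hm in Hz; lra).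
  assert (Hx' : (fun z => E (- z)) (- x)) by (simpl; rewrite Ropp_involutive; auto).
  pose proof (sup_with_ge _ (- dflt) (- x) Hb Hx'). lra.
Qed.

Lemma inf_with_ge (dflt m : R) :
  (forall x, E x -> m <= x) -> m <= dflt -> m <= inf_with dflt E.
Proof.
  intros Hm Hd. unfold inf_with.
  destruct (classic (exists x, E x)) as [[x Hx]|Hn].
  - enough (sup_with (- dflt) (fun z => E (- z)) <= - m) by lra.
    apply sup_with_le.
    + intros z Hz. apply Hm in Hz. lra.
    + exists (- x). rewrite Ropp_involutive; auto.
  - rewrite sup_with_dflt; [lra|]. intros [_ [z Hz]]. eauto.
Qed.

Lemma inf_with1_unit : (forall x, E x -> 0 <= x <= 1) -> 0 <= inf_with 1 E <= 1.
Proof.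
  intros H. split.
  - apply inf_with_ge; [intros x Hx; apply H; auto | lra].
  - destruct (classic (exists x, E x)) as [[x Hx]|Hn].
    + apply Rle_trans with x; [|apply H; auto].
      apply inf_with_le; auto. exists 0; intros y Hy; apply H; auto.
    + unfold inf_with. rewrite sup_with_dflt; [lra|]. intros [_ [z Hz]]. eauto.
Qed.

End InfWith.

Section Integral.

Context {d : nat}.
Implicit Types (v : Rd d -> R) (X Y D : rset d).

Lemma simple_sum_nil v X : simple_sum v X 0.
Proof. exists nil. split; [intros q []|split; [constructor|reflexivity]]. Qed.

Lemma simple_sum_sub v X Y r :
  (forall x, X x -> Y x) -> simple_sum v X r -> simple_sum v Y r.
Proof.
  intros HXY [l [Hl Hrest]]. exists l. split; auto.
  intros p Hp. destruct (Hl p Hp) as [H0 [HB [Hf Hv]]]. repeat split; auto.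
  - apply HXY, (Hv x H).
  - apply (Hv x H).
Qed.

Lemma bound_simple_sum_sub v X Y :
  (forall x, X x -> Y x) -> bound (simple_sum v Y) -> bound (simple_sum v X).
Proof.
  intros HXY [M HM]. exists M. intros r Hr. apply HM. eapply simple_sum_sub; eauto.
Qed.

Lemma lint_ge0 v X : bound (simple_sum v X) -> 0 <= lint v X.
Proof. intros Hb. apply sup_with_ge; auto. apply simple_sum_nil. Qed.

Lemma lint_sub v X Y :
  (forall x, X x -> Y x) -> bound (simple_sum v Y) -> lint v X <= lint v Y.
Proof.
  intros HXY Hb. apply sup_with_le.
  - intros r Hr. apply sup_with_ge; auto. eapply simple_sum_sub; eauto.
  - exists 0. apply simple_sum_nil.
Qed.

Lemma VS_piece (S : rset d -> Prop) v X :
  S X -> bound (simple_sum v X) -> VS S v X = lint v X.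
Proof.
  intros HSX Hb.
  assert (Hle : forall r, (exists s', S s' /\ (forall x, s' x -> X x) /\ r = lint v s') ->
                  r <= lint v X).
  { intros r [s' [_ [Hs' ->]]]. apply lint_sub; auto. }
  apply Rle_antisym.
  - apply sup_with_le; auto. exists (lint v X), X. auto.
  - apply sup_with_ge; [exists (lint v X); exact Hle|]. exists X. auto.
Qed.

Lemma Borel_and X Y : Borel X -> Borel Y -> Borel (fun x => X x /\ Y x).
Proof.
  intros HX HY.
  set (F := fun n : nat => match n with O => fun x => ~ X x | _ => fun x => ~ Y x end).
  apply Borel_ext with (fun x => ~ (exists n, F n x)).
  - apply Borel_compl, Borel_cunion. intros [|n]; apply Borel_compl; auto.
  - intros x. split.
    + intros H. split; apply NNPP; intros Hn; apply H; [exists O | exists 1%nat]; exact Hn.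
    + intros [Hx Hy] [[|n] Hn]; auto.
Qed.

Definition share D v Y : R := lint v Y / lint v D.

Lemma share_unit D v Y :
  value_density D v -> (forall x, Y x -> D x) -> 0 <= share D v Y <= 1.
Proof.
  intros [_ [_ [_ [Hb Hp]]]] HY. unfold share.
  pose proof (lint_ge0 v Y (bound_simple_sum_sub v Y D HY Hb)).
  pose proof (lint_sub v Y D HY Hb).
  split.
  - apply Rmult_le_pos; [lra | apply Rlt_le, Rinv_0_lt_compat; lra].
  - apply Rmult_le_reg_r with (lint v D); auto. field_simplify; lra.
Qed.

Lemma share_chain D v s Y :
  0 < lint v D -> 0 < lint v s -> share D v Y = share s v Y * share D v s.
Proof. intros HD Hs. unfold share. field. split; lra. Qed.

Lemma lint_pos_of_share D v Y a :
  0 < lint v D -> 0 < a -> a <= share D v Y -> 0 < lint v Y.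
Proof.
  intros HD Ha Hr. unfold share in Hr.
  replace (lint v Y) with (lint v Y / lint v D * lint v D) by (field; lra).
  apply Rmult_lt_0_compat; lra.
Qed.

Lemma value_density_restrict D s v :
  value_density D v -> (forall x, s x -> D x) -> Borel s -> 0 < lint v s ->
  value_density s v.
Proof.
  intros [Hnn [[M HM] [Hlev [Hb _]]]] Hsub Hs Hpos.
  split; [intros x Hx; apply Hnn; auto|].
  split; [exists M; intros x Hx; apply HM; auto|].
  split; [|split; [eapply bound_simple_sum_sub; eauto | auto]].
  intros t. apply Borel_ext with (fun x => s x /\ (D x /\ t < v x)).
  - apply Borel_and; auto.
  - intros x; split; [intros [Hx [_ Ht]] | intros [Hx Ht]]; auto.
Qed.

End Integral.

Lemma min_upto_unit (f : nat -> R) n :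
  (forall i, (i < n)%nat -> 0 <= f i <= 1) -> 0 <= min_upto f n <= 1.
Proof.
  induction n as [|[|m] IH]; intros Hf; [simpl; lra | simpl; apply Hf; lia |].
  change (min_upto f (S (S m))) with (Rmin (min_upto f (S m)) (f (S m))).
  assert (Hm : 0 <= min_upto f (S m) <= 1) by (apply IH; intros i Hi; apply Hf; lia).
  assert (Hl : 0 <= f (S m) <= 1) by (apply Hf; lia).
  unfold Rmin; destruct Rle_dec; lra.
Qed.

Section TwoAgents.

Variable d : nat.
Variable S : rset d -> Prop.
Implicit Types (v : nat -> Rd d -> R) (X : nat -> rset d) (D C s : rset d).

Definition alloc_ratios n D v (q : R) : Prop :=
  exists X, is_S_alloc n S D X /\ q = min_ratio n D v X.

Definition ef_ratios n D v (q : R) : Prop :=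
  exists X, is_S_alloc n S D X /\ envy_free n S v X /\ q = min_ratio n D v X.

Lemma min_ratio_unit n D v X :
  (forall i, (i < n)%nat -> value_density D (v i)) -> is_S_alloc n S D X ->
  0 <= min_ratio n D v X <= 1.
Proof.
  intros Hv [_ [_ Hsub]]. apply min_upto_unit. intros i Hi.
  apply share_unit; [apply Hv; auto | intros x; apply Hsub; auto].
Qed.

Lemma PropEF_unit n D : 0 <= PropEF D n S <= 1.
Proof.
  apply inf_with1_unit. intros r [v [Hv ->]]. apply sup_with0_unit.
  intros q [X [HX [_ ->]]]. apply (min_ratio_unit n D v X); auto.
Qed.

Lemma PropA_unit n D : 0 <= PropA D n S <= 1.
Proof.
  apply inf_with1_unit. intros r [v [Hv ->]]. apply sup_with0_unit.
  intros q [X [HX ->]]. apply (min_ratio_unit n D v X); auto.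
Qed.

Lemma sup_ef_ratios_unit n D v :
  (forall i, (i < n)%nat -> value_density D (v i)) ->
  0 <= sup_with 0 (ef_ratios n D v) <= 1.
Proof.
  intros Hv. apply sup_with0_unit. intros q [X [HX [_ ->]]]. apply min_ratio_unit; auto.
Qed.

Lemma sup_alloc_ratios_unit n D v :
  (forall i, (i < n)%nat -> value_density D (v i)) ->
  0 <= sup_with 0 (alloc_ratios n D v) <= 1.
Proof.
  intros Hv. apply sup_with0_unit. intros q [X [HX ->]]. apply min_ratio_unit; auto.
Qed.

Lemma PropEF_le_sup_ef_ratios n D v :
  (forall i, (i < n)%nat -> value_density D (v i)) ->
  PropEF D n S <= sup_with 0 (ef_ratios n D v).
Proof.
  intros Hv. apply inf_with_le; [|eauto].
  exists 0. intros r [w [Hw ->]]. apply sup_ef_ratios_unit; auto.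
Qed.

Lemma PropA_le_sup_alloc_ratios n D v :
  (forall i, (i < n)%nat -> value_density D (v i)) ->
  PropA D n S <= sup_with 0 (alloc_ratios n D v).
Proof.
  intros Hv. apply inf_with_le; [|eauto].
  exists 0. intros r [w [Hw ->]]. apply sup_alloc_ratios_unit; auto.
Qed.

Lemma sup_ef_ratios_ge n D v X q :
  (forall i, (i < n)%nat -> value_density D (v i)) ->
  is_S_alloc n S D X -> envy_free n S v X -> q <= min_ratio n D v X ->
  q <= sup_with 0 (ef_ratios n D v).
Proof.
  intros Hv HX HEF Hq. eapply Rle_trans; [exact Hq|].
  apply sup_with_ge; [|exists X; auto].
  exists 1. intros r [Y [HY [_ ->]]]. apply min_ratio_unit; auto.
Qed.

Lemma is_S_alloc_sub n s D X :
  (forall x, s x -> D x) -> is_S_alloc n S s X -> is_S_alloc n S D X.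
Proof.
  intros Hs [HXS [Hdisj Hsub]]. split; [|split]; auto.
  intros i x Hi Hx. apply Hs, (Hsub i); auto.
Qed.

Lemma min_ratio2 D v X :
  min_ratio 2 D v X = Rmin (share D (v O) (X O)) (share D (v 1%nat) (X 1%nat)).
Proof. reflexivity. Qed.

Lemma lint_le_of_share D (w : Rd d -> R) (Y Y' : rset d) :
  0 < lint w D -> share D w Y <= share D w Y' -> lint w Y <= lint w Y'.
Proof.
  intros HD H. unfold share in H.
  apply Rmult_le_reg_r with (/ lint w D); [apply Rinv_0_lt_compat; lra | exact H].
Qed.

Lemma envy_free2_of_share D v X :
  (forall i, (i < 2)%nat -> value_density D (v i)) -> is_S_alloc 2 S D X ->
  share D (v O) (X 1%nat) <= share D (v O) (X O) ->
  share D (v 1%nat) (X O) <= share D (v 1%nat) (X 1%nat) ->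
  envy_free 2 S v X.
Proof.
  intros Hv [HXS [_ Hsub]] H0 H1 i j Hi Hj.
  destruct (Hv i Hi) as [_ [_ [_ [Hb HD]]]].
  assert (HVS : forall k, (k < 2)%nat -> VS S (v i) (X k) = lint (v i) (X k)).
  { intros k Hk. apply VS_piece; auto.
    apply bound_simple_sum_sub with D; auto. intros x; apply Hsub; auto. }
  rewrite !HVS by auto.
  destruct i as [|[|i]]; destruct j as [|[|j]]; try lia; try lra;
    apply lint_le_of_share with D; auto.
Qed.

Lemma envy_free_in_common_piece C v s a b :
  (forall s', S s' -> Borel s') ->
  (forall i, (i < 2)%nat -> value_density C (v i)) ->
  S s -> (forall x, s x -> C x) -> 0 < a ->
  (forall i, (i < 2)%nat -> a <= share C (v i) s) ->
  0 <= b < PropEF s 2 S ->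
  exists Z, is_S_alloc 2 S C Z /\ envy_free 2 S v Z /\ a * b <= min_ratio 2 C v Z.
Proof.
  intros HS Hv Hs Hsub Ha Hshare Hb.
  assert (HC : forall i, (i < 2)%nat -> 0 < lint (v i) C).
  { intros i Hi. apply (Hv i Hi). }
  assert (Hpos : forall i, (i < 2)%nat -> 0 < lint (v i) s).
  { intros i Hi. apply (lint_pos_of_share C (v i) s a); auto. }
  assert (Hvs : forall i, (i < 2)%nat -> value_density s (v i)).
  { intros i Hi. apply value_density_restrict with C; auto. }
  destruct (sup_with0_approx (ef_ratios 2 s v) b) as [q [[Z [HZ [HEF ->]]] Hq]];
    [lra | eapply Rlt_le_trans; [apply Hb | apply PropEF_le_sup_ef_ratios; auto] |].
  exists Z. split; [eapply is_S_alloc_sub; eauto | split; auto].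
  assert (Hgain : forall i, (i < 2)%nat -> b < share s (v i) (Z i) ->
                    a * b <= share C (v i) (Z i)).
  { intros i Hi Hbi. rewrite (share_chain C (v i) s (Z i)) by auto.
    rewrite Rmult_comm. apply Rmult_le_compat; try lra. apply Hshare; auto. }
  rewrite min_ratio2 in Hq |- *.
  apply Rmin_glb; apply Hgain; auto;
    eapply Rlt_le_trans; [exact Hq | apply Rmin_l | exact Hq | apply Rmin_r].
Qed.

Lemma envy_free_of_alloc C v X a b :
  (forall s', S s' -> Borel s') ->
  (forall i, (i < 2)%nat -> value_density C (v i)) ->
  is_S_alloc 2 S C X -> 0 < a -> a <= min_ratio 2 C v X ->
  0 <= b <= 1 -> (forall s, S s -> b < PropEF s 2 S) ->
  exists Z, is_S_alloc 2 S C Z /\ envy_free 2 S v Z /\ a * b <= min_ratio 2 C v Z.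
Proof.
  intros HS Hv HX Ha HaX Hb HbS.
  pose proof HX as [HXS [_ Hsub]].
  rewrite min_ratio2 in HaX.
  assert (H0 : a <= share C (v O) (X O)) by (eapply Rle_trans; [exact HaX | apply Rmin_l]).
  assert (H1 : a <= share C (v 1%nat) (X 1%nat)) by (eapply Rle_trans; [exact HaX | apply Rmin_r]).
  assert (Hpiece : forall k, (k < 2)%nat -> (forall i, (i < 2)%nat -> a <= share C (v i) (X k)) ->
            exists Z, is_S_alloc 2 S C Z /\ envy_free 2 S v Z /\ a * b <= min_ratio 2 C v Z).
  { intros k Hk Hk2. apply envy_free_in_common_piece with (X k); auto.
    - intros x; apply Hsub; auto.
    - split; [lra | auto]. }
  destruct (Rle_lt_dec a (share C (v 1%nat) (X O))) as [A1|A1].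
  { apply (Hpiece O); [lia|]. intros [|[|i]] Hi; auto; lia. }
  destruct (Rle_lt_dec a (share C (v O) (X 1%nat))) as [A0|A0].
  { apply (Hpiece 1%nat); [lia|]. intros [|[|i]] Hi; auto; lia. }
  exists X. split; [auto | split].
  - apply envy_free2_of_share with C; auto; lra.
  - rewrite min_ratio2. assert (a * b <= a) by nra.
    apply Rmin_glb; lra.
Qed.

End TwoAgents.

Theorem mainTheorem9 (d : nat) (C : rset d) (S : rset d -> Prop)
  (HC : Borel C) (HS : forall s, S s -> Borel s) :
  PropEF C 2 S >= PropA C 2 S * inf_with 1 (fun r => exists s, S s /\ r = PropEF s 2 S).
Proof.
  set (Q := inf_with 1 (fun r => exists s, S s /\ r = PropEF s 2 S)).
  assert (HQ : 0 <= Q <= 1) by (apply inf_with1_unit; intros r [s [_ ->]]; apply PropEF_unit).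
  assert (HQs : forall s, S s -> Q <= PropEF s 2 S).
  { intros s Hs. apply inf_with_le; [|eauto].
    exists 0. intros r [s' [_ ->]]. apply PropEF_unit. }
  pose proof (PropA_unit d S 2 C) as HP.
  apply Rle_ge, inf_with_ge; [|nra].
  intros r [v [Hv ->]].
  apply mult_le_of_forall_lt; [lra | lra | apply sup_ef_ratios_unit; auto |].
  intros a b Ha Hb.
  destruct (sup_with0_approx (alloc_ratios d S 2 C v) a) as [q [[X [HX ->]] Hq]];
    [lra | eapply Rlt_le_trans; [apply Ha | apply PropA_le_sup_alloc_ratios; auto] |].
  destruct (envy_free_of_alloc d S C v X a b) as [Z [HZ [HEF Hab]]]; auto; try lra.
  { intros s Hs. specialize (HQs s Hs). lra. }
  apply sup_ef_ratios_ge with Z; auto.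
Qed.
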